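(* Let $U\in\mathbb{R}^{n\times d}$, let $\mathbf{x}_*\in\mathbb{R}^d$ be $s$-sparse and $\mathbf{y}=U\mathbf{x}_*$ (noiseless, $\mathbf{e}=0$). Let $\mathbf{x}_t$ be an iterate of Algorithm 1 and $\mathbf{x}_{t+1}$ the next iterate; let $\mathcal{S}_t,\mathcal{S}_{t+1},\mathcal{S}_*$ be the supports of $\mathbf{x}_t,\mathbf{x}_{t+1},\mathbf{x}_*$. If $|\mathcal{S}_t\setminus\mathcal{S}_*|\le s$ and $\lambda_t\ge\frac{\delta_s+\sqrt2\theta_{s,s}}{\sqrt s}\|\mathbf{x}_t-\mathbf{x}_*\|_2$, then $|\mathcal{S}_{t+1}\setminus\mathcal{S}_*|\le s$ and $|\mathcal{S}_*\cup\mathcal{S}_t\cup\mathcal{S}_{t+1}|\le3s$.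
   Context: $U_{\mathcal T}$ is the column submatrix of $U$ indexed by $\mathcal T$. $\delta_s$ is the smallest constant $\ge0$ with $(1-\delta_s)\|\mathbf{v}\|_2^2\le\|U_{\mathcal T}\mathbf{v}\|_2^2\le(1+\delta_s)\|\mathbf{v}\|_2^2$ for all $|\mathcal T|\le s$, $\mathbf{v}\in\mathbb{R}^{|\mathcal T|}$; $\theta_{s,s}$ (with $2s\le d$) is the smallest constant with $|\langle U_{\mathcal T}\mathbf{v},U_{\mathcal T'}\mathbf{v}'\rangle|\le\theta_{s,s}\|\mathbf{v}\|_2\|\mathbf{v}'\|_2$ for all disjoint $\mathcal T,\mathcal T'$ of size at most $s$. Algorithm 1: $\mathbf{x}_1=0$ and $\mathbf{x}_{t+1}=\mathrm{sign}(\widehat{\mathbf{x}}_t)[|\widehat{\mathbf{x}}_t|-\lambda_t]_+$ with $\widehat{\mathbf{x}}_t=\mathbf{x}_t-U^\top(U\mathbf{x}_t-\mathbf{y})$ (componentwise), for parameters $\lambda_t>0$. *)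

From mathcomp Require Import all_boot all_order all_algebra.
From mathcomp Require Import boolp classical_sets reals.
Set Implicit Arguments. Unset Strict Implicit. Unset Printing Implicit Defensive.
Import Order.TTheory GRing.Theory Num.Theory.
Local Open Scope ring_scope.
Local Open Scope classical_set_scope.

Section Defs.
Variable R : realType.

Definition sqnorm {m : nat} (v : 'cV[R]_m) : R := \sum_(i < m) (v i 0) ^+ 2.
Definition norm2 {m : nat} (v : 'cV[R]_m) : R := Num.sqrt (sqnorm v).
Definition inner {m : nat} (a b : 'cV[R]_m) : R := \sum_(i < m) a i 0 * b i 0.

Definition supp {d : nat} (x : 'cV[R]_d) : {set 'I_d} := [set i | x i 0 != 0].

(* U_T : column submatrix of U indexed by T (columns in increasing order) *)
Definition colsubT {n d : nat} (U : 'M[R]_(n, d)) (T : {set 'I_d}) : 'M[R]_(n, #|T|) :=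
  colsub (fun k : 'I_#|T| => enum_val k) U.

Definition rip_set {n d : nat} (U : 'M[R]_(n, d)) (s : nat) : set R :=
  [set c | 0 <= c /\
    forall (T : {set 'I_d}) (v : 'cV[R]_#|T|), (#|T| <= s)%N ->
      (1 - c) * sqnorm v <= sqnorm (colsubT U T *m v) /\
      sqnorm (colsubT U T *m v) <= (1 + c) * sqnorm v].

Definition delta {n d : nat} (U : 'M[R]_(n, d)) (s : nat) : R := inf (rip_set U s).

Definition roc_set {n d : nat} (U : 'M[R]_(n, d)) (s : nat) : set R :=
  [set c | 0 <= c /\
    forall (T T' : {set 'I_d}) (v : 'cV[R]_#|T|) (v' : 'cV[R]_#|T'|),
      (#|T| <= s)%N -> (#|T'| <= s)%N -> (T :&: T' == finset.set0)%SET ->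
      `|inner (colsubT U T *m v) (colsubT U T' *m v')| <= c * norm2 v * norm2 v'].

Definition theta {n d : nat} (U : 'M[R]_(n, d)) (s : nat) : R := inf (roc_set U s).

Definition soft (l a : R) : R := Num.sg a * Num.max (`|a| - l) 0.

(* Algorithm 1: x_1 = 0, x_{t+1} = soft_{lam_t}(x_t - U^T (U x_t - y)).
   Indices: iterate t (t >= 1) is ista U y lam t; ista ... 0 is unused (= 0). *)
Fixpoint ista {n d : nat} (U : 'M[R]_(n, d)) (y : 'cV[R]_n) (lam : nat -> R) (t : nat)
  : 'cV[R]_d :=
  match t with
  | 0 | 1 => 0
  | t'.+1 =>
      let xt := ista U y lam t' in
      let xh := xt - U^T *m (U *m xt - y) in
      \col_i soft (lam t') (xh i 0)
  end.

End Defs.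

(* Put h := x_t - x_* and w := h - U^T U h, so that x_t - U^T (U x_t - y) = x_* + w;
   an index outside S_* therefore survives soft thresholding only where
   |w_i| > lam_t.  If there were more than s such indices, a set T of s of them
   would give ||w_T||^2 > s lam_t^2.  On the other hand
   ||w_T||^2 = <w_T, h> - <U w_T, U h>, and splitting h into its parts on T, on
   S_* and on the rest of S_t, the RIP (through polarization) bounds the part on
   T and the restricted orthogonality constant bounds the two parts supported
   off T, so that ||w_T|| <= (delta_s + sqrt 2 theta_{s,s}) ||h|| <= sqrt s lam_t.
   The bound 3s follows by splitting S_* u S_t u S_{t+1} into S_* and the
   parts of S_t and S_{t+1} outside S_*. *)

From mathcomp Require Import all_boot all_order all_algebra.
From mathcomp Require Import classical_sets reals.
From mathcomp Require Import ring lra.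
Import Order.TTheory GRing.Theory Num.Theory.
Set Implicit Arguments. Unset Strict Implicit. Unset Printing Implicit Defensive.
Local Open Scope ring_scope.

Section Euclidean.
Variable R : realType.

Section Dim.
Variable m : nat.
Implicit Types (a b c x : 'cV[R]_m) (P Q : {set 'I_m}).

Lemma sqnormE a : sqnorm a = inner a a.
Proof. by apply: eq_bigr => i _; rewrite expr2. Qed.

Lemma innerC a b : inner a b = inner b a.
Proof. by apply: eq_bigr => i _; rewrite mulrC. Qed.

Lemma innerDl a b c : inner (a + b) c = inner a c + inner b c.
Proof. by rewrite /inner -big_split; apply: eq_bigr => i _; rewrite mxE mulrDl. Qed.

Lemma innerDr a b c : inner a (b + c) = inner a b + inner a c.
Proof. by rewrite innerC innerDl !(innerC a). Qed.

Lemma innerZl k a b : inner (k *: a) b = k * inner a b.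
Proof. by rewrite /inner mulr_sumr; apply: eq_bigr => i _; rewrite mxE mulrA. Qed.

Lemma inner0l a : inner 0 a = 0.
Proof. by apply: big1 => i _; rewrite mxE mul0r. Qed.

Lemma inner0r a : inner a 0 = 0.
Proof. by rewrite innerC inner0l. Qed.

Lemma innerZr k a b : inner a (k *: b) = k * inner a b.
Proof. by rewrite innerC innerZl innerC. Qed.

Lemma innerNr a b : inner a (- b) = - inner a b.
Proof. by rewrite innerC -scaleN1r innerZl innerC mulN1r. Qed.

Lemma innerBr a b c : inner a (b - c) = inner a b - inner a c.
Proof. by rewrite innerDr innerNr. Qed.

Lemma sqnormD a b : sqnorm (a + b) = sqnorm a + 2 * inner a b + sqnorm b.
Proof. by rewrite !sqnormE innerDl !innerDr (innerC b a); ring. Qed.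

Lemma sqnormB a b : sqnorm (a - b) = sqnorm a - 2 * inner a b + sqnorm b.
Proof.
have sqnormN : sqnorm (- b) = sqnorm b.
  by apply: eq_bigr => i _; rewrite mxE sqrrN.
by rewrite sqnormD innerNr sqnormN mulrN.
Qed.

Lemma sqnormZ k a : sqnorm (k *: a) = k ^+ 2 * sqnorm a.
Proof. by rewrite !sqnormE innerZl innerZr mulrA expr2. Qed.

Lemma sqnorm_ge0 a : 0 <= sqnorm a.
Proof. by apply: sumr_ge0 => i _; apply: sqr_ge0. Qed.

Lemma norm2_ge0 a : 0 <= norm2 a.
Proof. exact: sqrtr_ge0. Qed.

Lemma sqr_norm2 a : norm2 a ^+ 2 = sqnorm a.
Proof. by rewrite sqr_sqrtr // sqnorm_ge0. Qed.

Lemma norm2_eq0 a : norm2 a = 0 -> a = 0.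
Proof.
move=> a0; apply/matrixP => i j; rewrite (ord1 j) mxE; apply/eqP.
have /psumr_eq0P sq0 : sqnorm a = 0 by rewrite -sqr_norm2 a0 expr0n.
by rewrite -sqrf_eq0 sq0 // => k _; apply: sqr_ge0.
Qed.

Lemma supp_subset_eq0 P a i : supp a \subset P -> i \notin P -> a i 0 = 0.
Proof.
move=> /fintype.subsetP aP iP; apply/eqP; apply: contraNT iP => ai0.
by apply: aP; rewrite inE.
Qed.

Lemma supp_subsetP P a :
  (forall i, i \notin P -> a i 0 = 0) -> supp a \subset P.
Proof.
move=> aP; apply/fintype.subsetP => i; rewrite inE; apply: contraNT => iP.
by rewrite aP.
Qed.

Lemma supp_addr P a b :
  supp a \subset P -> supp b \subset P -> supp (a + b) \subset P.
Proof.
move=> aP bP; apply: supp_subsetP => i iP.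
by rewrite mxE (supp_subset_eq0 aP) // (supp_subset_eq0 bP) // addr0.
Qed.

Lemma supp_scaler P k a : supp a \subset P -> supp (k *: a) \subset P.
Proof.
by move=> aP; apply: supp_subsetP => i iP; rewrite mxE (supp_subset_eq0 aP) // mulr0.
Qed.

Lemma supp_oppr a : supp (- a) = supp a.
Proof. by apply/setP => i; rewrite !inE mxE oppr_eq0. Qed.

Lemma inner_disjoint_supp a b : [disjoint supp a & supp b] -> inner a b = 0.
Proof.
move=> ab; apply: big1 => i _; have [ai0|ai0] := eqVneq (a i 0) 0.
  by rewrite ai0 mul0r.
have ia : i \in supp a by rewrite inE.
have := disjointFr ab ia; rewrite inE => /negbFE/eqP ->.
by rewrite mulr0.
Qed.

Definition mask P x : 'cV[R]_m := \col_i (if i \in P then x i 0 else 0).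

Lemma supp_mask P x : supp (mask P x) \subset P.
Proof. by apply: supp_subsetP => i iP; rewrite mxE (negbTE iP). Qed.

Lemma mask_id P x : supp x \subset P -> mask P x = x.
Proof.
move=> xP; apply/matrixP => i j; rewrite (ord1 j) mxE.
by case: ifP => // /negbT /(supp_subset_eq0 xP).
Qed.

Lemma mask_setU P Q x :
  [disjoint P & Q] -> mask (P :|: Q) x = mask P x + mask Q x.
Proof.
move=> PQ; apply/matrixP => i j; rewrite !mxE inE.
have [iP|_] := boolP (i \in P); last by rewrite add0r.
by rewrite (disjointFr PQ iP) addr0.
Qed.

Lemma inner_mask_disjoint P Q a b :
  [disjoint P & Q] -> inner (mask P a) (mask Q b) = 0.
Proof.
by move=> PQ; apply/inner_disjoint_supp/(disjointW (supp_mask _ _) (supp_mask _ _)).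
Qed.

Lemma inner_mask_l P x : inner (mask P x) x = sqnorm (mask P x).
Proof.
by rewrite sqnormE; apply: eq_bigr => i _; rewrite mxE; case: ifP; rewrite ?mul0r.
Qed.

Lemma sqnorm_mask P x : sqnorm (mask P x) = \sum_(i in P) x i 0 ^+ 2.
Proof.
rewrite /sqnorm [RHS]big_mkcond; apply: eq_bigr => i _.
by rewrite mxE; case: ifP; rewrite ?expr0n.
Qed.

Lemma abs_entry_le_norm2 a i : `|a i 0| <= norm2 a.
Proof.
rewrite -sqrtr_sqr ler_sqrt ?sqnorm_ge0 // /sqnorm (bigD1 i) //= lerDl.
by apply: sumr_ge0 => j _; apply: sqr_ge0.
Qed.

End Dim.

Lemma inner_mul_tr k m (A : 'M[R]_(k, m)) (z : 'cV[R]_m) (v : 'cV[R]_k) :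
  inner z (A^T *m v) = inner (A *m z) v.
Proof.
rewrite /inner; under eq_bigr => i _ do rewrite mxE mulr_sumr.
rewrite exchange_big /=; apply: eq_bigr => j _.
by rewrite mxE mulr_suml; apply: eq_bigr => i _; rewrite !mxE; ring.
Qed.

End Euclidean.

Lemma ler_inf_affine (R : realType) (E : set R) (a b k : R) :
  nonempty E -> 0 <= k -> (forall c, E c -> a <= c * k + b) -> a <= inf E * k + b.
Proof.
move=> [c0 Ec0] k_ge0 aE; have [k0|k_gt0] := eqVneq k 0.
  by move: (aE c0 Ec0); rewrite k0 !mulr0.
have k_pos : 0 < k by rewrite lt0r k_gt0.
rewrite -lerBlDr -ler_pdivrMr //; apply: lb_le_inf; first by exists c0.
by move=> c Ec; rewrite ler_pdivrMr // lerBlDr aE.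
Qed.

Lemma ler_orthosplit_sqrt2 (R : rcfType) (c1 c2 a b e H : R) :
  0 <= c1 -> 0 <= c2 -> 0 <= a -> 0 <= b -> 0 <= e -> 0 <= H ->
  a ^+ 2 + b ^+ 2 + e ^+ 2 = H ^+ 2 ->
  c1 * a + c2 * (b + e) <= (c1 + Num.sqrt 2 * c2) * H.
Proof.
move=> c1_ge0 c2_ge0 a_ge0 b_ge0 e_ge0 H_ge0 sq.
have r2 : Num.sqrt 2 ^+ 2 = 2 :> R by rewrite sqr_sqrtr.
have r2_ge0 : 0 <= Num.sqrt 2 :> R := sqrtr_ge0 2.
have a_le : a <= H by nra.
have be_le : b + e <= Num.sqrt 2 * H.
  have : (b + e) ^+ 2 <= (Num.sqrt 2 * H) ^+ 2.
    by rewrite exprMn r2 -sq; have := sqr_ge0 (b - e); have := sqr_ge0 a; nra.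
  have := mulr_ge0 r2_ge0 H_ge0; nra.
nra.
Qed.

Section RestrictedIsometry.
Variables (R : realType) (n d : nat) (U : 'M[R]_(n, d)) (s : nat).
Implicit Types (T : {set 'I_d}) (x y : 'cV[R]_d).

Definition compress T x : 'cV[R]_#|T| := \col_k x (enum_val k) 0.

Lemma colsubT_mul_compress T x :
  supp x \subset T -> colsubT U T *m compress T x = U *m x.
Proof.
move=> xT; apply/matrixP => i j; rewrite (ord1 j) !mxE.
rewrite [RHS](bigID (mem T)) /= [X in _ = _ + X]big1 ?addr0; last first.
  by move=> k kT; rewrite (supp_subset_eq0 xT) ?mulr0.
by rewrite (big_enum_val (A := mem T)) /=; apply: eq_bigr => k _; rewrite !mxE.
Qed.

Lemma sqnorm_compress T x : supp x \subset T -> sqnorm (compress T x) = sqnorm x.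
Proof.
move=> xT; rewrite [RHS](bigID (mem T)) /= [X in _ = _ + X]big1 ?addr0; last first.
  by move=> k kT; rewrite (supp_subset_eq0 xT) ?expr0n.
by rewrite (big_enum_val (A := mem T)) /=; apply: eq_bigr => k _; rewrite !mxE.
Qed.

Lemma rip_setP c T x : rip_set U s c -> (#|T| <= s)%N -> supp x \subset T ->
  (1 - c) * sqnorm x <= sqnorm (U *m x) <= (1 + c) * sqnorm x.
Proof.
case=> _ rip sT xT; have [lo hi] := rip T (compress T x) sT.
by rewrite -(colsubT_mul_compress xT) -(sqnorm_compress xT) lo hi.
Qed.

Lemma roc_setP c T T' x x' : roc_set U s c -> (#|T| <= s)%N -> (#|T'| <= s)%N ->
  [disjoint T & T'] -> supp x \subset T -> supp x' \subset T' ->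
  `|inner (U *m x) (U *m x')| <= c * norm2 x * norm2 x'.
Proof.
case=> _ roc sT sT' TT' xT xT'; rewrite -setI_eq0 in TT'.
have := roc T T' (compress T x) (compress T' x') sT sT' TT'.
by rewrite !colsubT_mul_compress // /norm2 !sqnorm_compress.
Qed.

Lemma rip_inner_eq_sqnorm c T x y : rip_set U s c -> (#|T| <= s)%N ->
  supp x \subset T -> supp y \subset T -> sqnorm x = sqnorm y ->
  `|inner x y - inner (U *m x) (U *m y)| <= c * sqnorm y.
Proof.
move=> rip sT xT yT xy.
have /andP[lo_p hi_p] := rip_setP rip sT (supp_addr xT yT).
have yT' : supp (- y) \subset T by rewrite supp_oppr.
have /andP[lo_m hi_m] := rip_setP rip sT (supp_addr xT yT').
move: lo_p hi_p lo_m hi_m; rewrite !mulmxDr mulmxN !sqnormB !sqnormD xy.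
by move=> *; rewrite ler_norml; apply/andP; split; lra.
Qed.

Lemma rip_inner c T x y : rip_set U s c -> (#|T| <= s)%N ->
  supp x \subset T -> supp y \subset T ->
  `|inner x y - inner (U *m x) (U *m y)| <= c * norm2 x * norm2 y.
Proof.
move=> rip sT xT yT.
have [x0|x_neq0] := eqVneq (norm2 x) 0.
  by rewrite x0 mulr0 mul0r (norm2_eq0 x0) mulmx0 !inner0l subr0 normr0.
have [y0|y_neq0] := eqVneq (norm2 y) 0.
  by rewrite y0 mulr0 (norm2_eq0 y0) mulmx0 !inner0r subr0 normr0.
set a := norm2 x in x_neq0 *; set b := norm2 y in y_neq0 *.
have ab_gt0 : 0 < a * b by rewrite mulr_gt0 // lt0r ?x_neq0 ?y_neq0 norm2_ge0.
have := rip_inner_eq_sqnorm rip sT (supp_scaler b xT) (supp_scaler a yT).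
rewrite !sqnormZ -!sqr_norm2 -/a -/b -!scalemxAr !innerZl !innerZr.
have -> : c * (a ^+ 2 * b ^+ 2) = a * b * (c * a * b) by ring.
move/(_ (mulrC _ _)); rewrite !mulrA -mulrBr normrM (mulrC b).
by rewrite (ger0_norm (ltW ab_gt0)) => h; rewrite -(ler_pM2l ab_gt0) !mulrA.
Qed.

(* A crude bound on U, only needed to see that the sets of admissible RIP and
   ROC constants are nonempty: otherwise their infima would be junk values. *)
Let C := d%:R * \sum_i \sum_j `|U i j|.

Lemma colsubT_mul_entry_le T (v : 'cV[R]_#|T|) i :
  `|(colsubT U T *m v) i 0| <= C * norm2 v.
Proof.
have entry_le i' j : `|U i' j| <= \sum_i \sum_j `|U i j|.
  rewrite (bigD1 i') //= (bigD1 j) //= -addrA lerDl.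
  by rewrite addr_ge0 ?sumr_ge0 // => *; rewrite sumr_ge0.
rewrite mxE; apply: le_trans (ler_norm_sum _ _ _) _.
apply: le_trans (_ : \sum_(k < #|T|) (\sum_i \sum_j `|U i j|) * norm2 v <= _).
  apply: ler_sum => k _; rewrite normrM mxE.
  by rewrite ler_pM ?entry_le ?abs_entry_le_norm2.
rewrite sumr_const card_ord -mulr_natl mulrA ler_wpM2r ?norm2_ge0 //.
apply: ler_wpM2r; first by rewrite sumr_ge0 // => *; rewrite sumr_ge0.
by rewrite ler_nat (leq_trans (max_card _)) ?card_ord.
Qed.

Lemma rip_set_neq0 : nonempty (rip_set U s).
Proof.
exists (1 + n%:R * C ^+ 2); rewrite /rip_set /=.
split=> [|T v _]; first by rewrite addr_ge0 // mulr_ge0 ?sqr_ge0.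
have sq_le : sqnorm (colsubT U T *m v) <= n%:R * C ^+ 2 * sqnorm v.
  apply: le_trans (_ : \sum_(i < n) (C * norm2 v) ^+ 2 <= _).
    apply: ler_sum => i _; rewrite -[X in X <= _]real_normK ?num_real // !expr2.
    by rewrite ler_pM ?normr_ge0 ?colsubT_mul_entry_le.
  by rewrite sumr_const card_ord -[X in X <= _]mulr_natl exprMn sqr_norm2 mulrA.
have := sqnorm_ge0 v; have := sqnorm_ge0 (colsubT U T *m v).
have : 0 <= n%:R * C ^+ 2 :> R by rewrite mulr_ge0 ?sqr_ge0.
by move=> *; split; nra.
Qed.

Lemma roc_set_neq0 : nonempty (roc_set U s).
Proof.
exists (n%:R * C ^+ 2); rewrite /roc_set /=.
split=> [|T T' v v' _ _ _]; first by rewrite mulr_ge0 ?sqr_ge0.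
apply: le_trans (ler_norm_sum _ _ _) _.
apply: le_trans (_ : \sum_(i < n) (C * norm2 v) * (C * norm2 v') <= _).
  by apply: ler_sum => i _; rewrite normrM ler_pM ?colsubT_mul_entry_le.
by rewrite sumr_const card_ord -[X in X <= _]mulr_natl mulrACA -expr2 !mulrA.
Qed.

Lemma norm_mask_residual_le_rip c1 c2 (S A T : {set 'I_d}) h :
  rip_set U s c1 -> roc_set U s c2 ->
  (#|S| <= s)%N -> (#|A| <= s)%N -> (#|T| <= s)%N ->
  [disjoint T & S] -> supp h \subset S :|: A ->
  norm2 (mask T (h - U^T *m (U *m h))) <= (c1 + Num.sqrt 2 * c2) * norm2 h.
Proof.
move=> rip roc sS sA sT TS hSA; have c1_ge0 : 0 <= c1 by case: rip.
have c2_ge0 : 0 <= c2 by case: roc.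
set w := h - _; set z := mask T w; set Q := A :\: (T :|: S).
(* [z] and [mask T h] share the support T, which is where the RIP applies; the
   parts [mask S h] and [mask Q h] are supported off T, where the ROC applies. *)
set h1 := mask T h; set h2 := mask S h; set h3 := mask Q h.
have TSQ : [disjoint T :|: S & Q].
  rewrite -setI_eq0; apply/eqP/setP => i.
  by rewrite !inE; case: (_ || _); rewrite ?andbF.
have TQ : [disjoint T & Q] by apply: disjointWl TSQ; exact: finset.subsetUl.
have SQ : [disjoint S & Q] by apply: disjointWl TSQ; exact: finset.subsetUr.
have h_split : h = h1 + h2 + h3.
  rewrite -!mask_setU // mask_id //; apply: fintype.subset_trans hSA _.
  by apply/fintype.subsetP => i; rewrite !inE; case: (i \in T); case: (i \in S).
have sq_split : sqnorm h = sqnorm h1 + sqnorm h2 + sqnorm h3.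
  rewrite {1}h_split !sqnormD !innerDl (inner_mask_disjoint h h TS).
  by rewrite (inner_mask_disjoint h h TQ) (inner_mask_disjoint h h SQ); ring.
have z_split : sqnorm z =
    (inner z h1 - inner (U *m z) (U *m h1))
    - inner (U *m z) (U *m h2) - inner (U *m z) (U *m h3).
  have -> : sqnorm z = inner z w by rewrite inner_mask_l.
  rewrite /w innerBr inner_mul_tr h_split !mulmxDr !innerDr.
  rewrite (inner_mask_disjoint _ h TS) (inner_mask_disjoint _ h TQ); ring.
have b1 := rip_inner rip sT (supp_mask T w) (supp_mask T h).
have sQ : (#|Q| <= s)%N by rewrite (leq_trans _ sA) ?subset_leq_card ?subsetDl.
have b2 := roc_setP roc sT sS TS (supp_mask T w) (supp_mask S h).
have b3 := roc_setP roc sT sQ TQ (supp_mask T w) (supp_mask Q h).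
have z_le : norm2 z <= c1 * norm2 h1 + c2 * (norm2 h2 + norm2 h3).
  have [->|z_neq0] := eqVneq (norm2 z) 0.
    by rewrite addr_ge0 ?mulr_ge0 ?addr_ge0 ?norm2_ge0.
  rewrite -(ler_pM2l (_ : 0 < norm2 z)) ?lt0r ?z_neq0 ?norm2_ge0 //.
  rewrite -expr2 sqr_norm2 z_split.
  move: b1 b2 b3; rewrite !ler_norml => /andP[? ?] /andP[? ?] /andP[? ?].
  lra.
apply: le_trans z_le _; apply: ler_orthosplit_sqrt2 => //; rewrite ?norm2_ge0 //.
by rewrite !sqr_norm2.
Qed.

Lemma norm_mask_residual_le (S A T : {set 'I_d}) h :
  (#|S| <= s)%N -> (#|A| <= s)%N -> (#|T| <= s)%N ->
  [disjoint T & S] -> supp h \subset S :|: A ->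
  norm2 (mask T (h - U^T *m (U *m h))) <=
    (delta U s + Num.sqrt 2 * theta U s) * norm2 h.
Proof.
move=> sS sA sT TS hSA.
have h_ge0 := norm2_ge0 h; have r2_ge0 : 0 <= Num.sqrt 2 :> R := sqrtr_ge0 2.
have -> : (delta U s + Num.sqrt 2 * theta U s) * norm2 h =
    theta U s * (Num.sqrt 2 * norm2 h) + delta U s * norm2 h by ring.
rewrite /theta /delta; apply: ler_inf_affine; [exact: roc_set_neq0 | exact: mulr_ge0 |].
move=> c2 roc; rewrite (addrC (c2 * _)).
apply: ler_inf_affine => [|//|c1 rip]; first exact: rip_set_neq0.
have -> : c1 * norm2 h + c2 * (Num.sqrt 2 * norm2 h) =
    (c1 + Num.sqrt 2 * c2) * norm2 h by ring.
exact: norm_mask_residual_le_rip rip roc sS sA sT TS hSA.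
Qed.

Lemma sqnorm_mask_residual_le (S A T : {set 'I_d}) h l :
  (0 < s)%N -> (#|S| <= s)%N -> (#|A| <= s)%N -> (#|T| <= s)%N ->
  [disjoint T & S] -> supp h \subset S :|: A ->
  (delta U s + Num.sqrt 2 * theta U s) / Num.sqrt s%:R * norm2 h <= l ->
  sqnorm (mask T (h - U^T *m (U *m h))) <= s%:R * l ^+ 2.
Proof.
move=> s_gt0 sS sA sT TS hSA l_ge.
have sqrt_s_gt0 : 0 < Num.sqrt s%:R :> R by rewrite sqrtr_gt0 ltr0n.
have := norm_mask_residual_le sS sA sT TS hSA; set D := delta U s + _.
have -> : D * norm2 h = Num.sqrt s%:R * (D / Num.sqrt s%:R * norm2 h).
  by field; rewrite gt_eqF.
move/le_trans/(_ (ler_wpM2l (ltW sqrt_s_gt0) l_ge)) => w_le.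
rewrite -sqr_norm2 -[s%:R]sqr_sqrtr ?ler0n // -exprMn.
by rewrite lerXn2r ?nnegrE ?norm2_ge0 ?(le_trans (norm2_ge0 _) w_le).
Qed.

End RestrictedIsometry.

Lemma subset_of_card (T : finType) (B : {set T}) k :
  (k <= #|B|)%N -> exists2 C : {set T}, C \subset B & #|C| = k.
Proof.
elim: k => [|k IH] k_le; first by exists finset.set0; rewrite ?finset.sub0set ?cards0.
have [C CB Ck] := IH (ltnW k_le).
have /finset.set0Pn[x] : B :\: C != finset.set0.
  by rewrite -card_gt0 cardsD (finset.setIidPr CB) Ck subn_gt0.
rewrite inE => /andP[xC xB]; exists (x |: C); last by rewrite cardsU1 xC Ck.
by rewrite finset.subUset finset.sub1set xB CB.
Qed.

Lemma card_setU_le_setD (T : finType) (A B : {set T}) :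
  (#|A :|: B| <= #|A| + #|B :\: A|)%N.
Proof.
have -> : A :|: B = A :|: (B :\: A).
  by apply/setP => x; rewrite !inE; case: (x \in A).
exact: leq_card_setU.
Qed.

Section Thresholding.
Variable R : realType.

Lemma soft_neq0 (l a : R) : soft l a != 0 -> l < `|a|.
Proof.
by rewrite /soft; apply: contraNT; rewrite -leNgt -subr_le0 => /max_r ->; rewrite mulr0.
Qed.

Lemma istaS n d (U : 'M[R]_(n, d)) y lam t : (0 < t)%N ->
  ista U y lam t.+1 =
  \col_i soft (lam t) ((ista U y lam t - U^T *m (U *m ista U y lam t - y)) i 0).
Proof. by case: t. Qed.

Lemma card_large_entries_le m (P : {set 'I_m}) (w : 'cV[R]_m) (l : R) s :
  (0 < s)%N -> 0 <= l ->
  (forall T : {set 'I_m},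
     T \subset P -> #|T| = s -> sqnorm (mask T w) <= s%:R * l ^+ 2) ->
  (#|[set i in P | (l < `|w i 0|)%R]| <= s)%N.
Proof.
move=> s_gt0 l_ge0 mask_le; rewrite leqNgt; apply/negP.
move=> /ltnW /subset_of_card[T TB Ts].
have TP : T \subset P.
  by apply/fintype.subsetP => i /(fintype.subsetP TB); rewrite inE => /andP[].
apply/negP: (mask_le T TP Ts); rewrite -ltNge sqnorm_mask -Ts mulr_natl -sumr_const.
have /finset.set0Pn[i0 i0T] : T != finset.set0 by rewrite -card_gt0 Ts.
apply: ltr_sum; first by apply/hasP; exists i0; rewrite ?mem_index_enum.
move=> i /(fintype.subsetP TB); rewrite inE => /andP[_ l_lt].
by rewrite -[X in _ < X]real_normK ?num_real //; nra.
Qed.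

End Thresholding.

Theorem corollary1 (R : realType) (n d s : nat) (U : 'M[R]_(n, d))
  (xs : 'cV[R]_d) (lam : nat -> R) (t : nat) :
  (0 < s)%N -> (2 * s <= d)%N ->
  (forall k, 0 < lam k) ->
  (#|supp xs| <= s)%N ->
  (1 <= t)%N ->
  let y := U *m xs in
  let xt := ista U y lam t in
  let xt1 := ista U y lam t.+1 in
  (#|supp xt :\: supp xs| <= s)%N ->
  lam t >= (delta U s + Num.sqrt 2 * theta U s) / Num.sqrt s%:R * norm2 (xt - xs) ->
  (#|supp xt1 :\: supp xs| <= s)%N /\
  (#|supp xs :|: supp xt :|: supp xt1| <= 3 * s)%N.
Proof.
move=> s_gt0 _ lam_gt0 sS t_ge1 y xt xt1 sA lam_ge.
set S := supp xs; set h := xt - xs; set w := h - U^T *m (U *m h).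
have xt1E : xt1 = \col_i soft (lam t) ((xs + w) i 0).
  rewrite /xt1 istaS // -/xt /y -mulmxBr -/h /w /h.
  by rewrite addrA [xs + _]addrC subrK.
have supp_h : supp h \subset S :|: (supp xt :\: S).
  apply: supp_addr; last by rewrite supp_oppr finset.subsetUl.
  by apply/fintype.subsetP => i; rewrite !inE => ->; case: (xs i 0 != 0).
have large_w : supp xt1 :\: S \subset [set i in ~: S | lam t < `|w i 0|].
  apply/fintype.subsetP => i; rewrite !inE xt1E mxE.
  move=> /andP[/negPn/eqP xs_i /soft_neq0].
  by rewrite mxE xs_i add0r eqxx.
set B := [set i in ~: S | _] in large_w.
have card_B : (#|B| <= s)%N.
  apply: (card_large_entries_le (P := ~: S) s_gt0 (ltW (lam_gt0 t))) => T TS Ts.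
  apply: sqnorm_mask_residual_le sS sA (eq_leq Ts) _ supp_h lam_ge => //.
  by rewrite finset.disjoints_subset.
have card_St1 := leq_trans (subset_leq_card large_w) card_B.
split=> //; rewrite -finset.setUA (leq_trans (card_setU_le_setD _ _)) //.
rewrite finset.setDUl mulSn mul2n -addnn leq_add //.
exact: leq_trans (leq_card_setU _ _) (leq_add sA card_St1).
Qed.
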